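(* Let $M$ be a combinatorial $3$-manifold with vertex set $V=V_1\dot\cup V_2$, and let $S_{(V_1,V_2)}$ be a connected slicing of $M$ of genus $g$ with $q$ quadrilaterals. Suppose that for some $i\in\{1,2\}$ the induced subcomplex $\operatorname{span}(V_i)$ has dimension $1$, and let $n:=|V_i|$. Then \[ q\ \ge\ 3(n+g-1). \] In particular, this applies to every slicing all of whose facets are quadrilaterals.
   Context: A combinatorial $3$-manifold is a finite pure $3$-dimensional simplicial complex in which the link of every vertex is a combinatorial $2$-sphere. For a set $W$ of vertices, $\operatorname{span}(W)$ is the induced subcomplex of $M$ on $W$ (all simplices of $M$ with all vertices in $W$). A function $f:M\to\mathbb{R}$ is regular simplexwise linear (rsl) if it is linear on every simplex and takes pairwise distinct values on the vertices. Given a partition $V=V_1\dot\cup V_2$ of the vertex set into nonempty sets, choose an rsl-function $f$ with $f(v)<f(w)$ for all $v\in V_1$, $w\in V_2$ and $x_0$ strictly between $\max f(V_1)$ and $\min f(V_2)$; the slicing $S_{(V_1,V_2)}$ is the polyhedral surface $f^{-1}(x_0)$, whose facets are the triangles and quadrilaterals obtained by intersecting $f^{-1}(x_0)$ with the tetrahedra of $M$ meeting both $V_1$ and $V_2$ (a quadrilateral arises from a tetrahedron with exactly two vertices in each part). *)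

From mathcomp Require Import all_boot all_order all_algebra.
Set Implicit Arguments.
Unset Strict Implicit.
Unset Printing Implicit Defensive.

(* A pure simplicial complex is given by its set of facets [F] over a finite
   vertex type [V]; its faces are all nonempty subsets of facets. *)

(* faces of dimension k-1, i.e. the k-element faces *)
Definition faces (V : finType) (F : {set {set V}}) (k : nat) : {set {set V}} :=
  [set s : {set V} | (#|s| == k) && [exists t in F, s \subset t]].

Definition vertices (V : finType) (F : {set {set V}}) : {set V} :=
  [set x | [exists t in F, x \in t]].

Definition euler2 (V : finType) (F : {set {set V}}) : int :=
  (#|faces F 1|%:Z - #|faces F 2|%:Z + #|faces F 3|%:Z)%R.

(* Combinatorial 2-sphere: a (pure 2-dim) closed connected combinatorial
   surface (every edge in exactly two triangles, every vertex link a single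
   cycle) with Euler characteristic 2. *)
Definition comb_2sphere (V : finType) (F : {set {set V}}) : Prop :=
  [/\ F != set0 /\ (forall t, t \in F -> #|t| = 3),
      (forall e, e \in faces F 2 -> #|[set t in F | e \subset t]| = 2),
      (forall w a b, [set a; w] \in faces F 2 -> [set b; w] \in faces F 2 ->
          connect (fun x y => [set x; y; w] \in F) a b),
      (forall a b, a \in vertices F -> b \in vertices F ->
          connect (fun x y => [set x; y] \in faces F 2) a b)
    & euler2 F = 2%R].

Definition link (V : finType) (T : {set {set V}}) (v : V) : {set {set V}} :=
  [set t :\ v | t in [set t in T | v \in t]].

Definition comb_3manifold (V : finType) (T : {set {set V}}) : Prop :=
  [/\ T != set0,
      (forall t, t \in T -> #|t| = 4)
    & (forall v, v \in vertices T -> comb_2sphere (link T v))].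

Definition span (V : finType) (T : {set {set V}}) (W : {set V}) : {set {set V}} :=
  [set s : {set V} | [&& s != set0, s \subset W & [exists t in T, s \subset t]]].

Definition span_dim (V : finType) (T : {set {set V}}) (W : {set V}) (d : nat) : Prop :=
  (exists2 s, s \in span T W & #|s| = d.+1) /\
  (forall s, s \in span T W -> #|s| <= d.+1).

(* Slicing S_(V1, V2) with V2 = ~: V1, described combinatorially:
   its vertices are the edges of M meeting both parts, its edges come from the
   triangles of M meeting both parts, its facets from the tetrahedra of M
   meeting both parts (quadrilaterals: exactly two vertices in each part). *)
Definition crossing (V : finType) (V1 : {set V}) (s : {set V}) : bool :=
  (s :&: V1 != set0) && (s :\: V1 != set0).

Definition slice_vertices (V : finType) (T : {set {set V}}) (V1 : {set V}) :=
  [set e in faces T 2 | crossing V1 e].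
Definition slice_edges (V : finType) (T : {set {set V}}) (V1 : {set V}) :=
  [set e in faces T 3 | crossing V1 e].
Definition slice_facets (V : finType) (T : {set {set V}}) (V1 : {set V}) :=
  [set t in T | crossing V1 t].
Definition slice_quads (V : finType) (T : {set {set V}}) (V1 : {set V}) :=
  [set t in T | #|t :&: V1| == 2].

Definition slice_euler (V : finType) (T : {set {set V}}) (V1 : {set V}) : int :=
  (#|slice_vertices T V1|%:Z - #|slice_edges T V1|%:Z
     + #|slice_facets T V1|%:Z)%R.

(* Two vertices of the slicing are adjacent iff they span an edge of the
   slicing, i.e. the two edges of M lie in a common triangle of M. *)
Definition slice_connected (V : finType) (T : {set {set V}}) (V1 : {set V}) : Prop :=
  forall e1 e2, e1 \in slice_vertices T V1 -> e2 \in slice_vertices T V1 ->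
    connect (fun x y => [&& x \in slice_vertices T V1, y \in slice_vertices T V1
                          & (x :|: y) \in slice_edges T V1]) e1 e2.

From Pilot Require Import Defs.
From mathcomp Require Import all_boot all_order all_algebra.
From mathcomp Require Import zify.
Set Implicit Arguments.
Unset Strict Implicit.
Unset Printing Implicit Defensive.

(* Write [W] for the part whose span has dimension one and
   [m s := #|s :&: W|].  As span(W) has no triangle, [m s <= 2] for every
   face [s], and a face with [m s = 2] contains exactly one edge of span(W),
   namely [s :&: W].  Summing the Euler relation [f0 - f1 + f2 = 2] of the
   link of every [w \in W] gives
   [sum_edges m - sum_triangles m + sum_tetrahedra m = 2 |W|], while the Euler
   characteristic of the slicing is [E1 - (T1 + T2) + (Q1 + Q2) = 2 - 2g],
   where the index is the value of [m].  Around an edge of span(W) the numbers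
   of triangles and tetrahedra agree (its link is a circle), so [T2 = Q2], and
   subtracting the two relations leaves [#edges of span(W) = |W| + g - 1].
   Every edge lies in at least three tetrahedra, hence
   [Q2 >= 3 (|W| + g - 1)]. *)

Lemma cards_in_sum (T : finType) (X : {set T}) (P : pred T) :
  #|[set x in X | P x]| = \sum_(x in X) P x.
Proof.
rewrite -sum1_card [RHS]big_mkcond [LHS]big_mkcond /=.
by apply: eq_bigr => x _; rewrite !inE; case: (x \in X); case: (P x).
Qed.

Lemma double_count (T U : finType) (A : {set T}) (B : {set U}) (R : T -> U -> bool) :
  \sum_(a in A) #|[set b in B | R a b]| = \sum_(b in B) #|[set a in A | R a b]|.
Proof.
under eq_bigr do rewrite cards_in_sum.
by rewrite exchange_big /=; apply: eq_bigr => b _; rewrite cards_in_sum.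
Qed.

Lemma card_in_eq (T : finType) (A : {set T}) x : #|[set y in A | y == x]| = (x \in A).
Proof.
case xA: (x \in A) => /=; [rewrite -(cards1 x) | rewrite -(cards0 T)];
  by apply: eq_card => y; rewrite !inE; case: eqP => [->|]; rewrite ?xA ?andbF.
Qed.

Section Faces.
Variable V : finType.
Implicit Types (F T Y : {set {set V}}) (s t : {set V}).

Lemma subset_pair s a b : a \in s -> b \in s -> [set a; b] \subset s.
Proof. by move=> ??; rewrite subUset !sub1set; apply/andP. Qed.

Lemma pair_faces2 F t a b :
  t \in F -> a \in t -> b \in t -> a != b -> [set a; b] \in faces F 2.
Proof.
move=> tF at_ bt ab; rewrite inE cards2 ab /=.
by apply/existsP; exists t; rewrite tF subset_pair.
Qed.

Lemma faces_facets T : (forall t, t \in T -> #|t| = 4) -> faces T 4 = T.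
Proof.
move=> T4; apply/setP=> s; rewrite inE; apply/andP/idP.
- case=> /eqP s4 /existsP [t /andP [tT st]].
  suff -> : s = t by [].
  by apply/eqP; rewrite eqEcard st s4 T4.
- by move=> sT; rewrite T4 //; split=> //; apply/existsP; exists s; rewrite sT /=.
Qed.

Lemma faces_link T w k : faces (link T w) k = link (faces T k.+1) w.
Proof.
apply/setP=> x; rewrite inE; apply/andP/idP.
- case=> /eqP xk /existsP [_ /andP [/imsetP [t] + -> xt]].
  rewrite inE => /andP [tT wt].
  have wx : w \notin x by apply/negP=> /(subsetP xt); rewrite !inE eqxx.
  apply/imsetP; exists (w |: x); last by rewrite setU1K.
  rewrite !inE eqxx andbT cardsU1 wx xk eqxx /=.
  apply/existsP; exists t; rewrite tT subUset sub1set wt /=.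
  by rewrite (subset_trans xt) ?subsetDl.
- case/imsetP=> s; rewrite !inE => /andP [/andP [/eqP sk /existsP [t]]].
  case/andP=> tT st ws ->.
  move: sk; rewrite (cardsD1 w) ws add1n => -[->]; split=> //.
  apply/existsP; exists (t :\ w); rewrite setSD // andbT.
  by apply/imsetP; exists t => //; rewrite inE tT (subsetP st).
Qed.

Lemma card_link Y w : #|link Y w| = #|[set s in Y | w \in s]|.
Proof.
rewrite card_in_imset // => s1 s2; rewrite !inE => /andP [_ w1] /andP [_ w2] e.
by rewrite -(setD1K w1) -(setD1K w2) e.
Qed.

Lemma card_cofaces_link Y a b : a != b ->
  #|[set s in Y | [set a; b] \subset s]| = #|[set z in link Y a | b \in z]|.
Proof.
move=> ab.
have -> : [set z in link Y a | b \in z] = link [set s in Y | [set a; b] \subset s] a.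
  apply/setP=> z; rewrite inE; apply/andP/imsetP.
  - case=> /imsetP [s]; rewrite inE => /andP [sY as_] -> bs.
    exists s => //; rewrite !inE sY subset_pair //.
    by move: bs; rewrite inE => /andP [].
  - case=> s; rewrite !inE => /andP [/andP [sY abs] as_] ->.
    have bs : b \in s by rewrite -sub1set (subset_trans _ abs) // subsetUr.
    by split; [apply/imsetP; exists s; rewrite // inE sY | rewrite !inE eq_sym ab].
rewrite card_link; apply: eq_card => s; rewrite !inE -andbA.
case: (s \in Y) => //=; apply/idP/andP=> [abs|[]//].
by rewrite (subsetP abs) // !inE eqxx.
Qed.

End Faces.

Section Surface.
Variables (V : finType) (F : {set {set V}}).
Hypothesis triangles : forall t, t \in F -> #|t| = 3.
Hypothesis edge_in_two : forall e, e \in faces F 2 -> #|[set t in F | e \subset t]| = 2.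

Lemma card_edges_at_vertex_in_triangle t b : t \in F -> b \in t ->
  #|[set e in [set e in faces F 2 | b \in e] | e \subset t]| = 2.
Proof.
move=> tF bt.
have -> : [set e in [set e in faces F 2 | b \in e] | e \subset t] =
          [set [set b; x] | x in t :\ b].
  apply/setP=> e; rewrite !inE; apply/idP/imsetP.
  - case/andP=> /andP [/andP [e2 _] be] et.
    case/cards2P: e2 => y [z [yz ez]]; move: be et; rewrite {}ez !inE.
    case/orP=> /eqP -> /subUsetP [yt zt]; rewrite !sub1set in yt zt.
    + by exists z; rewrite // !inE zt eq_sym yz.
    + by exists y; rewrite 1?setUC // !inE yt yz.
  - case=> x; rewrite !inE => /andP [xb xt] ->.
    have := pair_faces2 tF bt xt; rewrite eq_sym xb inE => /(_ isT) ->.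
    by rewrite subset_pair // !inE eqxx.
rewrite card_in_imset; first by move: (triangles tF); rewrite (cardsD1 b) bt => -[].
move=> x y; rewrite !inE => /andP [xb _] _ exy.
have : x \in [set b; y] by rewrite -exy !inE eqxx orbT.
by rewrite !inE (negbTE xb) => /eqP.
Qed.

Lemma card_edges_at_vertex b :
  #|[set e in faces F 2 | b \in e]| = #|[set t in F | b \in t]|.
Proof.
set A := [set e in faces F 2 | b \in e].
have edges_twice : \sum_(e in A) #|[set t in F | e \subset t]| = 2 * #|A|.
  rewrite mulnC -sum_nat_const; apply: eq_bigr => e.
  by rewrite inE => /andP [eF _]; apply: edge_in_two.
have triangles_twice :
    \sum_(t in F) #|[set e in A | e \subset t]| = 2 * #|[set t in F | b \in t]|.
  rewrite cards_in_sum big_distrr; apply: eq_bigr => t tF.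
  case bt: (b \in t); first by rewrite card_edges_at_vertex_in_triangle.
  apply/eqP; rewrite cards_eq0; apply/eqP/setP=> e; rewrite !inE.
  by apply: contraFF bt => /andP [/andP [_ be]] /subsetP; apply.
apply/eqP; rewrite -(eqn_pmul2l (isT : 0 < 2)) -edges_twice -triangles_twice.
by rewrite double_count.
Qed.

Lemma other_triangle_at_edge e t : e \in faces F 2 -> t \in F -> e \subset t ->
  exists2 t', t' \in F & e \subset t' /\ t' != t.
Proof.
move=> eF tF et; have /eqP/cards2P [t1 [t2 [t12 E12]]] := edge_in_two eF.
have : t \in [set t1; t2] by rewrite -E12 inE tF.
have : t1 \in [set t in F | e \subset t] by rewrite E12 !inE eqxx.
have : t2 \in [set t in F | e \subset t] by rewrite E12 !inE eqxx orbT.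
rewrite !inE => /andP [t2F et2] /andP [t1F et1] /orP [] /eqP ->.
- by exists t2; rewrite // eq_sym.
- by exists t1.
Qed.

Lemma three_triangles_at_vertex t0 b : t0 \in F -> b \in t0 ->
  3 <= #|[set t in F | b \in t]|.
Proof.
move=> t0F bt0.
have [c] : exists c, c \in t0 :\ b.
  apply/set0Pn; rewrite -cards_eq0.
  by move: (triangles t0F); rewrite (cardsD1 b) bt0 add1n => -[->].
rewrite !inE eq_sym => /andP [bc ct0].
have [t1 t1F [bct1 t10]] := other_triangle_at_edge
  (pair_faces2 t0F bt0 ct0 bc) t0F (subset_pair bt0 ct0).
have [x xt1 xt0] : exists2 x, x \in t1 & x \notin t0.
  by apply/subsetPn; apply: contra t10 => t10_sub; rewrite eqEcard t10_sub !triangles.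
have bt1 : b \in t1 by apply: (subsetP bct1); rewrite !inE eqxx.
have bx : b != x by apply: contraNneq xt0 => <-.
have [t2 t2F [bxt2 t21]] := other_triangle_at_edge
  (pair_faces2 t1F bt1 xt1 bx) t1F (subset_pair bt1 xt1).
have xt2 : x \in t2 by apply: (subsetP bxt2); rewrite !inE eqxx orbT.
have t20 : t2 != t0 by apply: contraNneq xt0 => <-.
have : t2 |: (t1 |: [set t0]) \subset [set t in F | b \in t].
  rewrite !subUset !sub1set !inE t0F t1F t2F bt0 bt1 /=.
  by rewrite (subsetP bxt2) // !inE eqxx.
move/subset_leq_card; apply: leq_trans.
by rewrite !cardsU1 cards1 !inE negb_or t21 t20 t10.
Qed.

End Surface.

Section Manifold.
Variables (V : finType) (T : {set {set V}}).
Hypothesis manifold : comb_3manifold T.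

Lemma tetrahedra t : t \in T -> #|t| = 4.
Proof. by case: manifold => _ + _; apply. Qed.

Lemma link_sphere w : w \in vertices T -> comb_2sphere (link T w).
Proof. by case: manifold => _ _; apply. Qed.

Lemma link_euler w : w \in vertices T ->
  #|[set s in faces T 2 | w \in s]| + #|[set s in faces T 4 | w \in s]| =
  #|[set s in faces T 3 | w \in s]| + 2.
Proof.
by move=> /link_sphere [_ _ _ _]; rewrite /euler2 !faces_link !card_link; lia.
Qed.

Lemma edge_in_link E : E \in faces T 2 ->
  exists a b, [/\ a != b, E = [set a; b], a \in vertices T
                 & exists2 t, t \in link T a & b \in t].
Proof.
rewrite inE => /andP [/cards2P [a [b [ab ->]]] /existsP [t0 /andP [t0T abt0]]].
have /andP [at0 bt0] : (a \in t0) && (b \in t0) by rewrite -!sub1set -subUset.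
exists a, b; split=> //; first by rewrite inE; apply/existsP; exists t0; rewrite t0T.
exists (t0 :\ a); last by rewrite !inE eq_sym ab.
by apply/imsetP; exists t0; rewrite // inE t0T.
Qed.

Lemma card_triangles_at_edge E : E \in faces T 2 ->
  #|[set s in faces T 3 | E \subset s]| = #|[set t in T | E \subset t]|.
Proof.
case/edge_in_link=> a [b [ab -> /link_sphere [[_ triangles] edge_in_two _ _ _] _]].
by rewrite !card_cofaces_link // -faces_link card_edges_at_vertex.
Qed.

Lemma three_tetrahedra_at_edge E : E \in faces T 2 ->
  3 <= #|[set t in T | E \subset t]|.
Proof.
case/edge_in_link=> a [b [ab -> /link_sphere [[_ triangles] edge_in_two _ _ _]]].
case=> t ta bt; rewrite card_cofaces_link //.
exact (three_triangles_at_vertex triangles edge_in_two ta bt).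
Qed.

End Manifold.

Lemma crossing_meet (V : finType) (W s : {set V}) :
  crossing W s = (0 < #|s :&: W| < #|s|).
Proof. by rewrite /crossing -!cards_eq0 cardsD lt0n subn_eq0 -ltnNge. Qed.

Section SpanDimOne.
Variables (V : finType) (T : {set {set V}}) (W : {set V}).
Hypothesis manifold : comb_3manifold T.
Hypothesis W_vertices : {subset W <= vertices T}.
Hypothesis span_le2 : forall s, s \in Defs.span T W -> #|s| <= 2.

Definition faces_meeting k j := [set s in faces T k | #|s :&: W| == j].

Lemma meet_le2 k s : s \in faces T k -> #|s :&: W| <= 2.
Proof.
rewrite inE => /andP [_ /existsP [t /andP [tT st]]].
have [->|ne] := eqVneq (s :&: W) set0; first by rewrite cards0.
apply: span_le2; rewrite inE ne subsetIr /=; apply/existsP; exists t.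
by rewrite tT (subset_trans (subsetIl _ _) st).
Qed.

Lemma sum_card_faces_at k :
  \sum_(w in W) #|[set s in faces T k | w \in s]| =
  #|faces_meeting k 1| + 2 * #|faces_meeting k 2|.
Proof.
rewrite double_count !cards_in_sum big_distrr -big_split /=.
apply: eq_bigr => s /meet_le2; rewrite (@eq_card _ _ (s :&: W)) => [|w]; last first.
  by rewrite !inE andbC.
by case: #|s :&: W| => [|[|[|]]].
Qed.

Lemma card_crossing_edges :
  #|[set s in faces T 2 | crossing W s]| = #|faces_meeting 2 1|.
Proof.
rewrite !cards_in_sum; apply: eq_bigr => s s2; rewrite crossing_meet.
move: (meet_le2 s2); rewrite inE in s2; case/andP: s2 => /eqP -> _.
by case: #|s :&: W| => [|[|[|]]].
Qed.

Lemma card_crossing k : 2 < k ->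
  #|[set s in faces T k | crossing W s]| =
  #|faces_meeting k 1| + #|faces_meeting k 2|.
Proof.
move=> k_gt2; rewrite !cards_in_sum -big_split; apply: eq_bigr => s sk.
rewrite crossing_meet; move: (meet_le2 sk); rewrite inE in sk.
case/andP: sk => /eqP -> _.
by case: #|s :&: W| => [|[|[|]]] //=; rewrite ?k_gt2 ?(ltn_trans _ k_gt2).
Qed.

Lemma subset_face_meeting2 k s e : s \in faces T k -> e \in faces_meeting 2 2 ->
  (e \subset s) = (e == s :&: W).
Proof.
move=> sk; rewrite !inE => /andP [/andP [/eqP e2 _] /eqP eW2].
have eW : e \subset W by apply/setIidPl/eqP; rewrite eqEcard subsetIl eW2 e2.
apply/idP/eqP=> [es | ->]; last exact: subsetIl.
by apply/eqP; rewrite eqEcard subsetI es eW e2 (meet_le2 sk).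
Qed.

Lemma meet_in_faces_meeting2 k s : s \in faces T k ->
  (s :&: W \in faces_meeting 2 2) = (#|s :&: W| == 2).
Proof.
rewrite !inE -setIA setIid => /andP [_ /existsP [t /andP [tT st]]].
case: (#|s :&: W| == 2); rewrite //= andbT; apply/existsP; exists t.
by rewrite tT (subset_trans (subsetIl _ _) st).
Qed.

Lemma card_faces_meeting2 k :
  #|faces_meeting k 2| =
  \sum_(e in faces_meeting 2 2) #|[set s in faces T k | e \subset s]|.
Proof.
rewrite [LHS]cards_in_sum double_count; apply: eq_bigr => s sk.
have -> : [set e in faces_meeting 2 2 | e \subset s] =
          [set e in faces_meeting 2 2 | e == s :&: W].
  apply: eq_finset => e; case eA: (e \in faces_meeting 2 2) => //=.
  exact: subset_face_meeting2 sk eA.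
by rewrite card_in_eq (meet_in_faces_meeting2 sk).
Qed.

Lemma card_triangles_quads : #|faces_meeting 3 2| = #|faces_meeting 4 2|.
Proof.
rewrite !card_faces_meeting2 (faces_facets (tetrahedra manifold)).
apply: eq_bigr => e; rewrite inE => /andP [e2 _].
exact (card_triangles_at_edge manifold e2).
Qed.

Lemma three_quads_per_edge : 3 * #|faces_meeting 2 2| <= #|faces_meeting 4 2|.
Proof.
rewrite (card_faces_meeting2 4) (faces_facets (tetrahedra manifold)).
rewrite mulnC -sum_nat_const.
apply: leq_sum => e; rewrite inE => /andP [e2 _].
exact (three_tetrahedra_at_edge manifold e2).
Qed.

Lemma sum_link_euler :
  #|faces_meeting 2 1| + 2 * #|faces_meeting 2 2| +
  (#|faces_meeting 4 1| + 2 * #|faces_meeting 4 2|) =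
  #|faces_meeting 3 1| + 2 * #|faces_meeting 3 2| + #|W| * 2.
Proof.
rewrite -sum_nat_const -!sum_card_faces_at -!big_split /=.
by apply: eq_bigr => w wW; exact (link_euler manifold (W_vertices wW)).
Qed.

Lemma slice_quads_lower_bound g : slice_euler T W = (2 - 2 * g%:Z)%R ->
  3 * (#|W| + g - 1) <= #|slice_quads T W|.
Proof.
have facets4 := faces_facets (tetrahedra manifold).
have -> : slice_quads T W = faces_meeting 4 2 by rewrite /faces_meeting facets4.
have crossing_facets : slice_facets T W = [set s in faces T 4 | crossing W s].
  by rewrite facets4.
rewrite /slice_euler crossing_facets card_crossing_edges !card_crossing //.
have := sum_link_euler; have := three_quads_per_edge; rewrite -card_triangles_quads.
lia.
Qed.

End SpanDimOne.

Lemma crossingC (V : finType) (V1 s : {set V}) : crossing (~: V1) s = crossing V1 s.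
Proof. by rewrite /crossing setDE setCK -setDE andbC. Qed.

Lemma slice_eulerC (V : finType) (T : {set {set V}}) (V1 : {set V}) :
  slice_euler T (~: V1) = slice_euler T V1.
Proof.
have crossing_setC X : [set e in X | crossing (~: V1) e] = [set e in X | crossing V1 e].
  by apply: eq_finset => e; rewrite crossingC.
by rewrite /slice_euler /slice_vertices /slice_edges /slice_facets !crossing_setC.
Qed.

Lemma card_slice_quadsC (V : finType) (T : {set {set V}}) (V1 : {set V}) :
  (forall t, t \in T -> #|t| = 4) ->
  #|slice_quads T (~: V1)| = #|slice_quads T V1|.
Proof.
move=> T4; apply: eq_card => t; rewrite !inE; case tT: (t \in T) => //=.
rewrite -setDE cardsD (T4 _ tT).
have : #|t :&: V1| <= 4 by rewrite -(T4 _ tT) subset_leq_card ?subsetIl.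
by case: #|t :&: V1| => [|[|[|[|[|]]]]].
Qed.

(* Connectedness and nonemptiness of the parts only make [g] the genus of the
   slicing; the count itself just uses its Euler characteristic. *)
Theorem theorem4p4 (V : finType) (T : {set {set V}}) (V1 : {set V})
    (g : nat) (i : bool) :
  comb_3manifold T ->
  (forall v : V, v \in vertices T) ->
  V1 != set0 -> ~: V1 != set0 ->
  slice_connected T V1 ->
  slice_euler T V1 = (2 - 2 * (g%:Z))%R ->
  span_dim T (if i then V1 else ~: V1) 1 ->
  3 * (#|if i then V1 else ~: V1| + g - 1) <= #|slice_quads T V1|.
Proof.
move=> manifold all_vertices _ _ _ euler [_ span_le2].
have W_vertices (W : {set V}) : {subset W <= vertices T}.
  by move=> w _; apply: all_vertices.
case: i span_le2 => span_le2.
  exact (slice_quads_lower_bound manifold (W_vertices _) span_le2 euler).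
rewrite -card_slice_quadsC; last exact: tetrahedra manifold.
apply: (slice_quads_lower_bound manifold (W_vertices _) span_le2).
by rewrite slice_eulerC.
Qed.
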